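(* Let $G$ be a group, $\mathcal F$ a family of subgroups and $H\le G$. Let $L,P$ be finitely generated $\mathbb ZG$-modules with $P\subseteq L$, and $M,Q$ finitely generated $\mathbb ZH$-modules with $Q\subseteq M$, such that, as $\mathbb ZH$-modules, $M\subseteq L$ and $Q\subseteq P$, with all these inclusions compatible (the square $Q\hookrightarrow M\hookrightarrow L$, $Q\hookrightarrow P\hookrightarrow L$ commutes). Let $\|\cdot\|_L,\|\cdot\|_M$ be filling norms on $L$ and $M$, and suppose there is an integer $C_0\ge1$ with $\|x\|_L\le C_0\|x\|_M$ for all $x\in M$. Suppose $P$ is $\mathcal F$-free and there is a $\mathbb ZH$-homomorphism $\rho:P\to Q$ with $\rho\circ\imath=\mathrm{Id}_Q$, where $\imath:Q\to P$ is the inclusion. Then $\mathrm{Dist}^M_Q\preceq\mathrm{Dist}^L_P$.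
   Context: Filling norms: for a free $\mathbb ZG$-module with basis $B$, $\|\cdot\|_1$ is the $\ell_1$-norm for the $\mathbb Z$-basis $\{gb\}$; for a finitely generated $\mathbb ZG$-module $N$ and surjection $\eta:F\to N$ from a finitely generated based free module, $\|n\|_\eta=\min\{\|x\|_1:\eta(x)=n\}$. The distortion of a finitely generated submodule $P$ of a finitely generated $\mathbb ZG$-module $L$ is $\mathrm{Dist}^L_P(k)=\max\{\|\gamma\|_P:\gamma\in P,\|\gamma\|_L\le k\}$ (possibly $\infty$) for chosen filling norms $\|\cdot\|_P,\|\cdot\|_L$; similarly over $\mathbb ZH$. A $\mathbb ZG$-module is $\mathcal F$-free if it is isomorphic to $\mathbb Z[S]$ for a $G$-set $S$ all of whose isotropy groups lie in $\mathcal F$. $f\preceq g$ means $\exists C>0$: $f(n)\le Cg(Cn+C)+Cn+C$ for all $n$. *)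

From HB Require Import structures.
From mathcomp Require Import all_boot all_order all_algebra.
From Stdlib Require Import ClassicalEpsilon.
Set Implicit Arguments. Unset Strict Implicit. Unset Printing Implicit Defensive.
Import GRing.Theory.
Local Open Scope ring_scope.

Section Defs.
Variables (G : groupType) (V : zmodType).

Definition is_Gmodule (act : G -> V -> V) : Prop :=
  [/\ (forall g x y, act g (x - y) = act g x - act g y),
      (forall x, act 1%g x = x) &
      (forall g h x, act (g * h)%g x = act g (act h x))].

Definition submod (A : pred G) (act : G -> V -> V) (N : V -> Prop) : Prop :=
  [/\ N 0,
      (forall x y, N x -> N y -> N (x - y)) &
      (forall g x, A g -> N x -> N (act g x))].

(* A formal element  sum_k c_k g_k b_k  of the based free ZA-module on a
   finite basis, the basis element b being sent to the generator b of N
   (this is eta).  Terms are (c, g, b). *)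
Definition formal_over (A : pred G) (gens : seq V) (s : seq (int * G * V)) : Prop :=
  forall t, List.In t s -> A t.1.2 /\ t.2 \in gens.

Definition fsum (act : G -> V -> V) (s : seq (int * G * V)) : V :=
  \sum_(t <- s) (act t.1.2 t.2) *~ t.1.1.

Definition l1 (s : seq (int * G * V)) : nat := (\sum_(t <- s) absz t.1.1)%N.

Definition fin_gen (A : pred G) (act : G -> V -> V) (N : V -> Prop) : Prop :=
  exists gens : seq V, (forall v, v \in gens -> N v) /\
    forall x, N x -> exists s, formal_over A gens s /\ fsum act s = x.

(* nrm is the filling norm ||.||_eta on N for the surjection eta from the
   finitely generated based free ZA-module whose basis goes to gens *)
Definition filling_norm (A : pred G) (act : G -> V -> V) (N : V -> Prop)
    (nrm : V -> nat) : Prop :=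
  exists gens : seq V, (forall v, v \in gens -> N v) /\
    forall x, N x ->
      (exists s, [/\ formal_over A gens s, fsum act s = x & l1 s = nrm x]) /\
      (forall s, formal_over A gens s -> fsum act s = x -> (nrm x <= l1 s)%N).

(* P is F-free: P is ZG-isomorphic to Z[S] for a G-set S with all isotropy
   groups in F; phi is the image of the Z-basis S of Z[S]. *)
Definition Ffree (F : pred G -> Prop) (act : G -> V -> V) (P : V -> Prop) : Prop :=
  exists (S : eqType) (actS : G -> S -> S) (phi : S -> V),
    [/\ (forall s, actS 1%g s = s) /\ (forall g h s, actS (g * h)%g s = actS g (actS h s)),
        (forall s, F [pred g | actS g s == s]) /\ (forall g s, phi (actS g s) = act g (phi s)),
        (forall s, P (phi s)),
        (forall x, P x -> exists c : seq (int * S), x = \sum_(t <- c) phi t.2 *~ t.1) &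
        (forall c : seq (int * S), \sum_(t <- c) phi t.2 *~ t.1 = 0 ->
           forall s0, \sum_(t <- c | t.2 == s0) t.1 = 0)].

(* Dist^L_P(k) = max { ||g||_P : g in P, ||g||_L <= k }, None = infinity *)
Definition Dist (P : V -> Prop) (nP nL : V -> nat) (k : nat) : option nat :=
  let bnd b := forall x, P x -> (nL x <= k)%N -> (nP x <= b)%N in
  match excluded_middle_informative (exists b, bnd b) with
  | left _ => Some (epsilon (inhabits 0%N)
                 (fun b => bnd b /\ exists x, [/\ P x, (nL x <= k)%N & nP x = b]))
  | right _ => None
  end.
End Defs.

(* f <= g : exists C > 0, f(n) <= C g(Cn+C) + Cn + C for all n (None = infinity) *)
Definition dom_le (f g : nat -> option nat) : Prop :=
  exists C : nat, (0 < C)%N /\ forall n,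
    match g (C * n + C)%N with
    | None => True
    | Some b => exists a, f n = Some a /\ (a <= C * b + C * n + C)%N
    end.

From HB Require Import structures.
From mathcomp Require Import all_boot all_order all_algebra.
From Stdlib Require Import ClassicalEpsilon.
From Stdlib Require List.
Set Implicit Arguments. Unset Strict Implicit. Unset Printing Implicit Defensive.
Import GRing.Theory.
Local Open Scope ring_scope.

(* It suffices to bound ||q||_Q linearly by ||q||_P on Q.  Write q
   as a P-geodesic combination of G-translates of the generators of P and,
   independently, as a combination of H-translates of the generators of Q, and
   expand both in the free Z-basis S of P; by freeness the two expansions have
   the same coefficients.  The second expansion only uses basis elements in
   finitely many H-orbits, on which s |-> rho(phi s) has bounded Q-norm because
   rho is H-equivariant; extend this map by 0 to all of S.  Evaluated on the
   second expansion it gives rho(q) = q, and evaluated on the first it exhibits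
   q as a combination of Q-elements of bounded norm with total coefficient
   weight O(||q||_P). *)

Lemma InP (T : eqType) (x : T) (s : seq T) : reflect (List.In x s) (x \in s).
Proof.
elim: s => [|y s IH]; first by constructor.
rewrite in_cons; apply: (iffP orP) => [[/eqP->|/IH]|[->|/IH]]; by [left | right | rewrite eqxx |].
Qed.

Lemma leq_sum_mem (T : eqType) (F : T -> nat) (r : seq T) x :
  x \in r -> (F x <= \sum_(y <- r) F y)%N.
Proof. by move=> xr; rewrite (perm_big _ (perm_to_rem xr)) big_cons leq_addr. Qed.

Section AdditiveOn.
Variables (V W : zmodType) (N : V -> Prop).
Hypotheses (N0 : N 0) (NB : forall x y, N x -> N y -> N (x - y)).

Lemma closedN x : N x -> N (- x).
Proof. by move=> Nx; rewrite -sub0r; apply: NB. Qed.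

Lemma closedD x y : N x -> N y -> N (x + y).
Proof. by move=> Nx /closedN Ny; rewrite -[y]opprK; apply: NB. Qed.

Lemma closedMz n x : N x -> N (x *~ n).
Proof.
move=> Nx; have Nnat (k : nat) : N (x *+ k).
  by elim: k => [|k IH]; rewrite ?mulr0n // mulrS; apply: closedD.
by case: n => k; rewrite ?NegzE ?mulrNz; [| apply: closedN]; apply: Nnat.
Qed.

Lemma closed_sum (I : Type) (r : seq I) (p : pred I) (F : I -> V) :
  (forall i, List.In i r -> N (F i)) -> N (\sum_(i <- r | p i) F i).
Proof.
elim: r => [|i r IH] Nr; first by rewrite big_nil.
have Nr' : N (\sum_(j <- r | p j) F j) by apply: IH => j jr; apply: Nr; right.
by rewrite big_cons; case: (p i) => //; apply: closedD => //; apply: Nr; left.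
Qed.

Variable f : V -> W.
Hypothesis fB : forall x y, N x -> N y -> f (x - y) = f x - f y.

Lemma raddf_on0 : f 0 = 0.
Proof. by have := fB N0 N0; rewrite !subrr. Qed.

Lemma raddf_onN x : N x -> f (- x) = - f x.
Proof. by move=> Nx; rewrite -sub0r fB // raddf_on0 sub0r. Qed.

Lemma raddf_onD x y : N x -> N y -> f (x + y) = f x + f y.
Proof.
move=> Nx Ny; have := fB Nx (closedN Ny); rewrite opprK => ->.
by rewrite raddf_onN // opprK.
Qed.

Lemma raddf_onMz n x : N x -> f (x *~ n) = f x *~ n.
Proof.
move=> Nx; have fnat (k : nat) : f (x *+ k) = f x *+ k.
  elim: k => [|k IH]; first by rewrite !mulr0n raddf_on0.
  by rewrite !mulrS raddf_onD ?IH //; apply: (closedMz k).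
case: n => k; first exact: fnat.
by rewrite !NegzE !mulrNz raddf_onN ?fnat //; apply: (closedMz k.+1).
Qed.

Lemma raddf_on_sum (I : Type) (r : seq I) (p : pred I) (F : I -> V) :
  (forall i, List.In i r -> N (F i)) ->
  f (\sum_(i <- r | p i) F i) = \sum_(i <- r | p i) f (F i).
Proof.
elim: r => [|i r IH] Nr; first by rewrite !big_nil raddf_on0.
have Nr' j : List.In j r -> N (F j) by move=> jr; apply: Nr; right.
rewrite !big_cons; case: (p i); last exact: IH.
by rewrite raddf_onD ?IH //; [apply: Nr; left | apply: closed_sum].
Qed.

End AdditiveOn.

Section FormalSums.
Variables (G : groupType) (V : zmodType) (act : G -> V -> V).
Hypothesis actG : is_Gmodule act.

Let act_additive g (x y : V) : True -> True -> act g (x - y) = act g x - act g y.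
Proof. by case: actG => actB _ _ _ _; apply: actB. Qed.

Lemma act_sum g (I : Type) (r : seq I) (p : pred I) (F : I -> V) :
  act g (\sum_(i <- r | p i) F i) = \sum_(i <- r | p i) act g (F i).
Proof. by apply: (raddf_on_sum (N := fun _ => True)) => //; apply: act_additive. Qed.

Lemma act_Mz g n x : act g (x *~ n) = act g x *~ n.
Proof. by apply: (raddf_onMz (N := fun _ => True)) => //; apply: act_additive. Qed.

Definition scale_formal (n : int) (s : seq (int * G * V)) :=
  [seq (n * t.1.1, t.1.2, t.2) | t <- s].

Definition translate_formal (h : G) (s : seq (int * G * V)) :=
  [seq (t.1.1, (h * t.1.2)%g, t.2) | t <- s].

Lemma fsum_cat s1 s2 : fsum act (s1 ++ s2) = fsum act s1 + fsum act s2.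
Proof. exact: big_cat. Qed.

Lemma l1_cat (s1 s2 : seq (int * G * V)) : l1 (s1 ++ s2) = (l1 s1 + l1 s2)%N.
Proof. exact: big_cat. Qed.

Lemma fsum_scale n s : fsum act (scale_formal n s) = fsum act s *~ n.
Proof.
rewrite /fsum big_map mulrz_suml; apply: eq_bigr => t _ /=.
by rewrite mulrC mulrzA.
Qed.

Lemma l1_scale n s : l1 (scale_formal n s) = (absz n * l1 s)%N.
Proof. by rewrite /l1 big_map big_distrr; apply: eq_bigr => t _; apply: abszM. Qed.

Lemma fsum_translate h s : fsum act (translate_formal h s) = act h (fsum act s).
Proof.
rewrite /fsum big_map act_sum; apply: eq_bigr => t _ /=.
by rewrite act_Mz; case: actG => _ _ ->.
Qed.

Lemma l1_translate h s : l1 (translate_formal h s) = l1 s.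
Proof. exact: big_map. Qed.

Variables (A : pred G) (gens : seq V).

Lemma formal_over_cat s1 s2 :
  formal_over A gens s1 -> formal_over A gens s2 -> formal_over A gens (s1 ++ s2).
Proof. by move=> f1 f2 t /List.in_app_iff [/f1|/f2]. Qed.

Lemma formal_over_scale n s : formal_over A gens s -> formal_over A gens (scale_formal n s).
Proof. by move=> fs t /List.in_map_iff [u [<- /fs]]. Qed.

Lemma formal_over_translate h s : (forall g, A g -> A (h * g)%g) ->
  formal_over A gens s -> formal_over A gens (translate_formal h s).
Proof. by move=> hA fs t /List.in_map_iff [u [<- /fs [Au gu]]]; split => //; apply: hA. Qed.

End FormalSums.

Definition zcomb (S : Type) (W : zmodType) (f : S -> W) (c : seq (int * S)) : W :=
  \sum_(t <- c) f t.2 *~ t.1.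

Definition coef (S : eqType) (c : seq (int * S)) (s0 : S) : int :=
  \sum_(t <- c | t.2 == s0) t.1.

Section FillingNorm.
Variables (G : groupType) (V : zmodType) (act : G -> V -> V).
Variables (A : pred G) (N : V -> Prop) (nrm : V -> nat) (gens : seq V).

Definition filling_norm_for : Prop :=
  forall x, N x ->
    (exists s, [/\ formal_over A gens s, fsum act s = x & l1 s = nrm x]) /\
    (forall s, formal_over A gens s -> fsum act s = x -> (nrm x <= l1 s)%N).

Hypotheses (fillN : filling_norm_for) (subN : submod A act N).

Lemma filling_norm0 : nrm 0 = 0%N.
Proof.
have [N0 _ _] := subN; apply/eqP; rewrite -leqn0.
have := (fillN N0).2 [::]; rewrite /l1 /fsum !big_nil; apply => // t [].
Qed.

Lemma filling_norm_zcomb_le (S : Type) (f : S -> V) (c : seq (int * S)) :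
  (forall t, List.In t c -> N (f t.2)) ->
  (nrm (zcomb f c) <= \sum_(t <- c) absz t.1 * nrm (f t.2))%N.
Proof.
have [N0 NB _] := subN => Nc.
have Nzc : N (zcomb f c) by apply: closed_sum => // t /Nc; apply: closedMz.
suff [s [fs es ls]] : exists s, [/\ formal_over A gens s, fsum act s = zcomb f c &
    (l1 s <= \sum_(t <- c) absz t.1 * nrm (f t.2))%N].
  exact: leq_trans ((fillN Nzc).2 _ fs es) ls.
elim: c Nc {Nzc} => [|t c IH] Nc.
  by exists [::]; split; [move=> t [] | rewrite /fsum /zcomb !big_nil | rewrite /l1 big_nil].
have [|s [fs es ls]] := IH; first by move=> u cu; apply: Nc; right.
have [[st [fst est lst]] _] := fillN (Nc t (or_introl erefl)).
exists (scale_formal t.1 st ++ s); split.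
- by apply: formal_over_cat => //; apply: formal_over_scale.
- by rewrite fsum_cat fsum_scale est es /zcomb big_cons.
- by rewrite l1_cat l1_scale lst big_cons leq_add2l.
Qed.

Hypothesis actG : is_Gmodule act.

Lemma filling_norm_act_le h x :
  (forall g, A g -> A (h * g)%g) -> A h -> N x -> (nrm (act h x) <= nrm x)%N.
Proof.
have [_ _ NA] := subN => hA Ah Nx.
have [[s [fs es <-]] _] := fillN Nx.
rewrite -(l1_translate h); apply: (fillN (NA _ _ Ah Nx)).2.
- exact: formal_over_translate.
- by rewrite fsum_translate // es.
Qed.

End FillingNorm.

Section FreeCoefficients.
Variables (S : eqType) (W : zmodType).

Lemma zcomb_coef (f : S -> W) (c : seq (int * S)) (U : seq S) :
  uniq U -> (forall t, t \in c -> t.2 \in U) ->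
  zcomb f c = \sum_(s0 <- U) f s0 *~ coef c s0.
Proof.
move=> uU cU; rewrite /zcomb (eq_bigr (fun s0 => \sum_(t <- c)
    if t.2 == s0 then f t.2 *~ t.1 else 0)); last first.
  move=> s0 _; rewrite mulrz_sumr big_mkcond; apply: eq_bigr => t _.
  by case: eqP => // ->.
rewrite exchange_big; apply: eq_big_seq => t /cU tU.
rewrite (bigD1_seq t.2) //= eqxx big1 ?addr0 // => s0.
by rewrite eq_sym => /negbTE ->.
Qed.

Lemma eq_zcomb_coef (f : S -> W) (c c' : seq (int * S)) :
  coef c =1 coef c' -> zcomb f c = zcomb f c'.
Proof.
move=> cc'; set U := undup [seq t.2 | t <- c ++ c'].
have uU : uniq U := undup_uniq _.
have cU t : t \in c -> t.2 \in U by move=> tc; rewrite mem_undup map_f // mem_cat tc.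
have c'U t : t \in c' -> t.2 \in U.
  by move=> tc; rewrite mem_undup map_f // mem_cat tc orbT.
rewrite (zcomb_coef f uU cU) (zcomb_coef f uU c'U).
by apply: eq_bigr => s0 _; rewrite cc'.
Qed.

Lemma free_coef_eq (phi : S -> W) (c c' : seq (int * S)) :
  (forall d, zcomb phi d = 0 -> forall s0, coef d s0 = 0) ->
  zcomb phi c = zcomb phi c' -> coef c =1 coef c'.
Proof.
move=> free cc' s0.
have zc0 : zcomb phi (c ++ [seq (- t.1, t.2) | t <- c']) = 0.
  rewrite /zcomb big_cat big_map -/(zcomb phi c) cc' -[RHS](subrr (zcomb phi c')).
  by congr (_ + _); rewrite -sumrN; apply: eq_bigr => t _; rewrite mulrNz.
have := free _ zc0 s0; rewrite /coef big_cat big_map /= sumrN => /eqP.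
by rewrite subr_eq0 => /eqP.
Qed.

End FreeCoefficients.

Lemma ex_maximizer (T : Type) (p : T -> Prop) (f : T -> nat) B :
  (exists x, p x) -> (forall x, p x -> (f x <= B)%N) ->
  exists x, p x /\ forall y, p y -> (f y <= f x)%N.
Proof.
elim: B => [|B IH] [x px] fB.
  by exists x; split => // y py; rewrite (leq_trans (fB y py)).
have [[z [pz fzB]]|noB1] := classic (exists z, p z /\ f z = B.+1).
  by exists z; split => // y py; rewrite fzB fB.
apply: IH => [|y py]; first by exists x.
rewrite -ltnS ltn_neqAle fB // andbT; apply/eqP => fyB.
by apply: noB1; exists y.
Qed.

Section Distortion.
Variables (V : zmodType) (P : V -> Prop) (nP nL : V -> nat).

Lemma DistP k B :
  (exists x, P x /\ (nL x <= k)%N) ->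
  (forall x, P x -> (nL x <= k)%N -> (nP x <= B)%N) ->
  exists b, [/\ Dist P nP nL k = Some b, (b <= B)%N &
                forall x, P x -> (nL x <= k)%N -> (nP x <= b)%N].
Proof.
move=> ex bnd; rewrite /Dist; case: excluded_middle_informative => [_|[]]; last by exists B.
have [x [[Px Lx] max]] := @ex_maximizer _ (fun x => P x /\ (nL x <= k)%N) nP B ex
  (fun x px => bnd x px.1 px.2).
set spec := fun b => _ /\ _; have ex_spec : exists b, spec b.
  by exists (nP x); split => [y Py Ly|]; [apply: max | exists x].
have [bmax [y [Py Ly ey]]] := epsilon_spec (inhabits 0%N) _ ex_spec.
by eexists; split; [reflexivity | rewrite -ey; apply: bnd | exact: bmax].
Qed.

Lemma Dist_Some_ub k b : Dist P nP nL k = Some b ->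
  (exists x, P x /\ (nL x <= k)%N) ->
  forall x, P x -> (nL x <= k)%N -> (nP x <= b)%N.
Proof.
move=> Db ex; move: (Db); rewrite /Dist; case: excluded_middle_informative => // [[B bnd]] _.
by have [b' [Db' _ ub]] := DistP ex bnd; move: Db; rewrite Db' => -[<-].
Qed.

End Distortion.

Lemma dom_le_Dist (V : zmodType) (P Q : V -> Prop) (nP nQ nL nM : V -> nat) (C0 K : nat) :
  (forall x, Q x -> P x) -> Q 0 -> nM 0 = 0%N ->
  (forall x, Q x -> (nL x <= C0 * nM x)%N) -> (forall x, Q x -> (nQ x <= K * nP x)%N) ->
  dom_le (Dist Q nQ nM) (Dist P nP nL).
Proof.
move=> QP Q0 nM0 normLM normQP; set C := (C0 + K + 1)%N.
exists C; split => [|n]; first by rewrite /C addn1.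
case DP: (Dist P nP nL (C * n + C)) => [b|] //.
have exP : exists x, P x /\ (nL x <= C * n + C)%N.
  by exists 0; split; [exact: QP | rewrite (leq_trans (normLM 0 Q0)) // nM0 muln0].
have bndP := Dist_Some_ub DP exP.
have bndQ x : Q x -> (nM x <= n)%N -> (nQ x <= C * b)%N.
  move=> Qx Mx; apply: leq_trans (normQP x Qx) (leq_mul _ _).
    by rewrite /C addnC addnA leq_addl.
  apply: bndP (QP x Qx) _.
  rewrite (leq_trans (normLM x Qx)) // (leq_trans _ (leq_addr _ _)) //.
  by rewrite leq_mul // /C -addnA leq_addr.
have [|a [DQ aCb _]] := DistP (k := n) _ bndQ; first by exists 0; rewrite nM0.
by exists a; split => //; rewrite (leq_trans aCb) // -addnA leq_addr.
Qed.

Section Retraction.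
Variables (G : groupType) (H : {pred G}) (V : zmodType) (act : G -> V -> V).
Variables (P Q : V -> Prop) (nP nQ : V -> nat) (rho : V -> V) (gensP gensQ : seq V).
Variables (S : eqType) (actS : G -> S -> S) (phi : S -> V).

Hypotheses (groupH : group_closed H) (actG : is_Gmodule act).
Hypotheses (subP : submod predT act P) (subQ : submod H act Q) (QP : forall x, Q x -> P x).
Hypotheses (fillP : filling_norm_for act predT P nP gensP) (gensP_P : forall v, v \in gensP -> P v).
Hypotheses (fillQ : filling_norm_for act H Q nQ gensQ) (gensQ_Q : forall v, v \in gensQ -> Q v).
Hypotheses (phi_act : forall g s, phi (actS g s) = act g (phi s)) (P_phi : forall s, P (phi s)).
Hypotheses (phi_span : forall x, P x -> exists c, x = zcomb phi c)
           (phi_free : forall c, zcomb phi c = 0 -> forall s0, coef c s0 = 0).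
Hypotheses (rho_Q : forall x, P x -> Q (rho x))
           (rho_sub : forall x y, P x -> P y -> rho (x - y) = rho x - rho y)
           (rho_act : forall h x, H h -> P x -> rho (act h x) = act h (rho x))
           (rho_id : forall q, Q q -> rho q = q).

Definition basis_dec (b : V) : seq (int * S) :=
  epsilon (inhabits [::]) (fun c => b = zcomb phi c).

Lemma basis_decE b : P b -> b = zcomb phi (basis_dec b).
Proof. by move=> /phi_span; apply: epsilon_spec. Qed.

Definition expand (s : seq (int * G * V)) : seq (int * S) :=
  flatten [seq [seq (u.1 * t.1.1, actS t.1.2 u.2) | u <- basis_dec t.2] | t <- s].

Lemma zcomb_expand s : (forall t, List.In t s -> P t.2) -> zcomb phi (expand s) = fsum act s.
Proof.
elim: s => [|t s IH] Ps; first by rewrite /zcomb /fsum !big_nil.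
rewrite [expand _]/= /zcomb big_cat -/(zcomb phi (expand s)) IH; last first.
  by move=> t' st'; apply: Ps; right.
rewrite /fsum big_cons {2}(basis_decE (Ps t (or_introl erefl))) act_sum // mulrz_suml big_map.
by congr (_ + _); apply: eq_bigr => u _; rewrite act_Mz // phi_act mulrzA.
Qed.

Definition dec_size : nat := \sum_(b <- gensP) \sum_(u <- basis_dec b) absz u.1.

Lemma expand_weight_le s : formal_over predT gensP s ->
  (\sum_(u <- expand s) absz u.1 <= dec_size * l1 s)%N.
Proof.
elim: s => [|t s IH] fs; first by rewrite big_nil.
rewrite [expand _]/= big_cat big_map /l1 big_cons mulnDr.
apply: leq_add; last by apply: IH => t' st'; apply: fs; right.
rewrite (eq_bigr (fun u => absz u.1 * absz t.1.1)%N) => [|u _]; last exact: abszM.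
rewrite -big_distrl /= mulnC [(dec_size * _)%N]mulnC leq_mul2l.
rewrite (leq_sum_mem (fun b => \sum_(u <- basis_dec b) absz u.1)%N) ?orbT //.
exact: (fs t (or_introl erefl)).2.
Qed.

Definition in_Q_orbit (s : S) : Prop :=
  exists h b u, [/\ H h, b \in gensQ, u \in basis_dec b & s = actS h u.2].

Definition retract_basis (s : S) : V :=
  if excluded_middle_informative (in_Q_orbit s) then rho (phi s) else 0.

Definition retract_bound : nat :=
  \sum_(b <- gensQ) \sum_(u <- basis_dec b) nQ (rho (phi u.2)).

Lemma retract_basisQ s : Q (retract_basis s) /\ (nQ (retract_basis s) <= retract_bound)%N.
Proof.
have [Q0 _ QH] := subQ.
rewrite /retract_basis; case: excluded_middle_informative => [orb|_] /=; last first.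
  by split; rewrite ?(filling_norm0 fillQ subQ).
have [h [b [u [Hh bQ ub ->]]]] := orb; have Qu := rho_Q (P_phi u.2).
rewrite phi_act rho_act //; split; first exact: QH.
apply: leq_trans (filling_norm_act_le fillQ subQ actG _ Hh Qu) _.
  by move=> g Hg; apply: (group_closedM groupH).
apply: leq_trans (leq_sum_mem (fun u => nQ (rho (phi u.2))) ub) _.
exact: (leq_sum_mem (fun b => \sum_(u <- basis_dec b) nQ (rho (phi u.2)))%N bQ).
Qed.

Lemma in_Q_orbit_expand r : formal_over H gensQ r ->
  forall u, u \in expand r -> in_Q_orbit u.2.
Proof.
move=> fr u /InP /List.in_concat [l [/List.in_map_iff [t [<- rt]]]].
move=> /List.in_map_iff [v [<- /InP vt]]; have [Ht bt] := fr t rt.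
by exists t.1.2, t.2, v.
Qed.

Lemma zcomb_retract_expand r : formal_over H gensQ r -> Q (fsum act r) ->
  zcomb retract_basis (expand r) = fsum act r.
Proof.
move=> fr Qr; have [P0 PB _] := subP.
have Pr t : List.In t r -> P t.2 by move=> rt; apply/QP/gensQ_Q; exact: (fr t rt).2.
rewrite -[RHS](rho_id Qr) -zcomb_expand // /zcomb (raddf_on_sum P0 PB rho_sub); last first.
  by move=> u _; apply: closedMz.
apply: eq_big_seq => u /(in_Q_orbit_expand fr) Qu.
rewrite (raddf_onMz P0 PB rho_sub) // /retract_basis.
by case: excluded_middle_informative.
Qed.

Lemma retract_norm_le : exists K, forall q, Q q -> (nQ q <= K * nP q)%N.
Proof.
exists (retract_bound * dec_size)%N => q Qq.
have [[s [fs es <-]] _] := fillP (QP Qq).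
have [[r [fr er _]] _] := fillQ Qq.
have Ps t : List.In t s -> P t.2 by move=> st; apply: gensP_P; exact: (fs t st).2.
have Pr t : List.In t r -> P t.2 by move=> rt; apply/QP/gensQ_Q; exact: (fr t rt).2.
have same_coef : coef (expand s) =1 coef (expand r).
  by apply: free_coef_eq phi_free _; rewrite !zcomb_expand // es er.
rewrite -er -(zcomb_retract_expand fr) ?er // -(eq_zcomb_coef _ same_coef).
apply: leq_trans (filling_norm_zcomb_le fillQ subQ _) _.
  by move=> u _; exact: (retract_basisQ u.2).1.
apply: leq_trans (_ : \sum_(u <- expand s) absz u.1 * retract_bound <= _)%N.
  by apply: leq_sum => u _; rewrite leq_mul2l (retract_basisQ u.2).2 orbT.
by rewrite -big_distrl /= -mulnA [X in (_ <= X)%N]mulnC leq_mul2r expand_weight_le ?orbT.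
Qed.

End Retraction.

Lemma Ffree_retract_norm_le (G : groupType) (F : pred G -> Prop) (H : {pred G})
    (V : zmodType) (act : G -> V -> V) (P Q : V -> Prop) (nP nQ : V -> nat)
    (rho : V -> V) (gensP gensQ : seq V) :
  group_closed H -> is_Gmodule act -> submod predT act P -> submod H act Q ->
  (forall x, Q x -> P x) ->
  filling_norm_for act predT P nP gensP -> (forall v, v \in gensP -> P v) ->
  filling_norm_for act H Q nQ gensQ -> (forall v, v \in gensQ -> Q v) ->
  Ffree F act P ->
  (forall x, P x -> Q (rho x)) ->
  (forall x y, P x -> P y -> rho (x - y) = rho x - rho y) ->
  (forall h x, H h -> P x -> rho (act h x) = act h (rho x)) ->
  (forall q, Q q -> rho q = q) ->
  exists K, forall q, Q q -> (nQ q <= K * nP q)%N.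
Proof.
move=> groupH actG subP subQ QP fillP gensP_P fillQ gensQ_Q
  [S [actS [phi [_ [_ phi_act] P_phi phi_span phi_free]]]].
exact: (retract_norm_le (gensP := gensP) (gensQ := gensQ) (phi := phi)).
Qed.

Local Close Scope ring_scope.
Unset Implicit Arguments.

Theorem mainTheorem16 (G : groupType) (F : pred G -> Prop) (H : {pred G})
  (V : zmodType) (act : G -> V -> V) (L P M Q : V -> Prop)
  (nL nM nP nQ : V -> nat) (C0 : nat) (rho : V -> V) :
  group_closed H ->
  is_Gmodule act ->
  submod predT act L -> fin_gen predT act L ->
  submod predT act P -> fin_gen predT act P ->
  (forall x, P x -> L x) ->
  submod H act M -> fin_gen H act M ->
  submod H act Q -> fin_gen H act Q ->
  (forall x, Q x -> M x) ->
  (forall x, M x -> L x) ->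
  (forall x, Q x -> P x) ->
  filling_norm predT act L nL -> filling_norm H act M nM ->
  filling_norm predT act P nP -> filling_norm H act Q nQ ->
  (1 <= C0)%N -> (forall x, M x -> (nL x <= C0 * nM x)%N) ->
  Ffree F act P ->
  (forall x, P x -> Q (rho x)) ->
  (forall x y, P x -> P y -> rho (x - y)%R = (rho x - rho y)%R) ->
  (forall h x, H h -> P x -> rho (act h x) = act h (rho x)) ->
  (forall q, Q q -> rho q = q) ->
  dom_le (Dist Q nQ nM) (Dist P nP nL).
Proof.
move=> groupH actG _ _ subP _ _ subM _ subQ _ QM _ QP _ [gM [_ fillM]]
  [gP [gP_P fillP]] [gQ [gQ_Q fillQ]] _ normLM Ffree_P rho_Q rho_sub rho_act rho_id.
have [K normQP] := Ffree_retract_norm_le groupH actG subP subQ QP fillP gP_P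
  fillQ gQ_Q Ffree_P rho_Q rho_sub rho_act rho_id.
have [Q0 _ _] := subQ.
apply: (dom_le_Dist QP Q0 (filling_norm0 fillM subM)) normQP.
by move=> x Qx; apply: normLM; apply: QM.
Qed.
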